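(* Let $m\ge0$ and let $\phi_1,\dots,\phi_m$ be anticommuting variables. Let $\mathcal E:\mathscr R\to\mathbb Q(\alpha)[X,Y][\phi_1,\dots,\phi_m]$ be the algebra homomorphism determined by $$\mathcal E(p_n)=X\ (n\ge1),\qquad \mathcal E(\tilde p_n)=\sum_{i=1}^m\phi_i\,h_Y(n+i-m)\ (n\ge0),$$ where $h_Y(r)=\binom{Y+r-1}{r}$ for $r>0$, $h_Y(0)=1$ and $h_Y(r)=0$ for $r<0$. Then for every $f\in\mathscr R$ homogeneous of fermionic degree $m$ and every integer $N\ge m$, $$\mathcal E(f)\big|_{X=N,\,Y=m}=\phi_1\cdots\phi_m\,E_{N,m}(f).$$
   Context: Superfunctions: $x_i$ commuting, $\theta_i$ anticommuting ($\theta_i\theta_j=-\theta_j\theta_i$, $\theta_i^2=0$, commuting with the $x_j$); coefficients in $\mathbb Q(\alpha)$. For a superpartition $\Lambda=(\Lambda_1,\dots,\Lambda_m;\Lambda_{m+1},\dots,\Lambda_\ell)$ ($\Lambda_1>\dots>\Lambda_m\ge0$, $\Lambda_{m+1}\ge\dots\ge\Lambda_\ell>0$), the monomial $m_\Lambda(x_1,\dots,x_N;\theta_1,\dots,\theta_N)=\frac{1}{n_\Lambda!}\sum_{\sigma\in S_N}\theta_{\sigma(1)}\cdots\theta_{\sigma(m)}x_{\sigma(1)}^{\Lambda_1}\cdots x_{\sigma(N)}^{\Lambda_N}$ (with $\Lambda_i=0$ for $i>\ell$, $n_\Lambda!=\prod_{i\ge1}n_{\Lambda^s}(i)!$, $n_{\Lambda^s}(i)$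 the number of parts of $(\Lambda_{m+1},\dots,\Lambda_\ell)$ equal to $i$). $\mathscr R$ is the (super)algebra spanned by the inverse limits of these monomials; for $f\in\mathscr R$, $f(x_1,\dots,x_N;\theta_1,\dots,\theta_N)$ denotes the restriction to $N$ variables. Power sums $p_n=\sum_ix_i^n$ ($n\ge1$), $\tilde p_n=\sum_i\theta_ix_i^n$ ($n\ge0$); the products $p_\Lambda=\tilde p_{\Lambda_1}\cdots\tilde p_{\Lambda_m}p_{\Lambda_{m+1}}\cdots p_{\Lambda_\ell}$ form a basis of $\mathscr R$; the $\tilde p_n$ are odd and the $p_n$ even, and $\mathcal E$ respects this grading. Evaluation: for $F$ symmetric in $x_1,\dots,x_N,\theta_1,\dots,\theta_N$ (simultaneous permutations), homogeneous of degree $m\le N$ in $\theta$, write $F=\sum_{i_1<\dots<i_m}\theta_{i_1}\cdots\theta_{i_m}f_{i_1\dots i_m}(x)$ and set $E_{N,m}(F)=\bigl[f_{1\dots m}(x)/\prod_{1\le i<j\le m}(x_i-x_j)\bigr]_{x_1=\dots=x_N=1}$; for $f\in\mathscr R$, $E_{N,m}(f)=E_{N,m}(f(x_1,\dots,x_N;\theta_1,\dots,\theta_N))$. *)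

From HB Require Import structures.
From mathcomp Require Import all_boot all_order all_algebra.
From Stdlib Require Import ClassicalEpsilon.
Set Implicit Arguments. Unset Strict Implicit. Unset Printing Implicit Defensive.
Import Order.TTheory GRing.Theory Num.Theory.
Local Open Scope ring_scope.

(* Coefficient field Q(alpha) = rational functions in alpha over Q *)
Definition Qa : fieldType := {fraction {poly rat}}.

(* Grassmann (exterior) algebra over a commutative ring A with odd      *)
(* generators theta_0, ..., theta_{K-1}: an element is the function     *)
(* S |-> coefficient of theta_S, where theta_S is the product of the    *)
(* theta_i, i in S, in increasing order.                                *)
Section Grassmann.
Variables (A : comNzRingType) (K : nat).

Local Notation grass := {ffun {set 'I_K} -> A}.

(* theta_T theta_U = gsign T U theta_(T :|: U) when T, U are disjoint *)
Definition gsign (T U : {set 'I_K}) : A :=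
  (-1) ^+ #|[set p : 'I_K * 'I_K | (p.1 \in T) && (p.2 \in U) && (p.2 < p.1)%N]|.

Definition gmul (u v : grass) : grass :=
  [ffun S : {set 'I_K} => \sum_(T : {set 'I_K} | T \subset S) gsign T (S :\: T) * u T * v (S :\: T)].

Definition gone : grass := [ffun S : {set 'I_K} => (S == set0)%:R].
Definition gscal (a : A) : grass := [ffun S : {set 'I_K} => if S == set0 then a else 0].
Definition gen (i : 'I_K) : grass := [ffun S : {set 'I_K} => (S == [set i])%:R].
Definition gscale (a : A) (u : grass) : grass := [ffun S : {set 'I_K} => a * u S].
Definition gprod (s : seq grass) : grass := foldr gmul gone s.

End Grassmann.
Notation grass A K := {ffun {set 'I_K} -> A}.
Arguments gen {A K}.
Arguments gone {A K}.
Arguments gscal {A K}.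
Arguments gprod {A K}.
Arguments gscale {A K}.
Arguments gmul {A K}.
Arguments gsign {A K}.

(* Polynomials in N commuting variables x_0, ..., x_{N-1} over Qa,     *)
(* as iterated univariate polynomials.                                  *)
Fixpoint mp (n : nat) : idomainType :=
  if n is n'.+1 then ({poly mp n'} : idomainType) else Qa.

Fixpoint mvar (n : nat) : nat -> mp n :=
  match n return nat -> mp n with
  | 0 => fun _ => 0
  | n'.+1 => fun i => if i == n' then 'X else (@mvar n' i)%:P
  end.

Fixpoint mconst (n : nat) : Qa -> mp n :=
  match n return Qa -> mp n with
  | 0 => fun c => c
  | n'.+1 => fun c => (@mconst n' c)%:P
  end.

Fixpoint meval1 (n : nat) : mp n -> Qa :=
  match n return mp n -> Qa with
  | 0 => fun p => p
  | n'.+1 => fun p => @meval1 n' (p.[1])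
  end.

(* Elements of the algebra R: finite linear combinations of the basis  *)
(* p_Lambda; a superpartition Lambda = (a ; lam) with a the fermionic   *)
(* parts (strictly decreasing, >= 0) and lam the bosonic parts          *)
(* (nonincreasing, > 0).                                                *)
Definition spart := (seq nat * seq nat)%type.

Definition is_superpartition (L : spart) : bool :=
  [&& sorted (fun x y => (y < x)%N) L.1, sorted geq L.2 & all (fun k => (0 < k)%N) L.2].

(* f = \sum_(c, L) c * p_L *)
Definition superfun := seq (Qa * spart).

Definition homog_ferm (m : nat) (f : superfun) : bool :=
  all (fun cL => is_superpartition cL.2 && (size cL.2.1 == m)) f.

Definition ptilde_N (N n : nat) : grass (mp N) N :=
  \sum_(i < N) gscale (mvar N i ^+ n) (gen i).

Definition p_N (N n : nat) : mp N := \sum_(i < N) mvar N i ^+ n.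

Definition pLambda_N (N : nat) (L : spart) : grass (mp N) N :=
  gscale (\prod_(k <- L.2) p_N N k) (gprod [seq ptilde_N N n | n <- L.1]).

Definition restrict (N : nat) (f : superfun) : grass (mp N) N :=
  \sum_(cL <- f) gscale (mconst N cL.1) (pLambda_N N cL.2).

Definition vandermonde (N m : nat) : mp N :=
  \prod_(i < m) \prod_(j < m | (i < j)%N) (mvar N i - mvar N j).

(* E_{N,m}(F) = [ f_{1..m}(x) / prod_{i<j<=m} (x_i - x_j) ]_{x = 1} *)
Definition ENm (N m : nat) (F : grass (mp N) N) : Qa :=
  let g := F [set i : 'I_N | (i < m)%N] in
  meval1 (epsilon (inhabits 0) (fun q : mp N => g = vandermonde N m * q)).

(* Qa[X,Y] = {poly {poly Qa}}: outer variable X, inner variable Y *)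
Definition QXY : comNzRingType := {poly {poly Qa}}.

Definition hY (r : int) : {poly Qa} :=
  match r with
  | Posz k => (k`!%:R)^-1 *: \prod_(j < k) ('X + j%:R%:P)
  | Negz _ => 0
  end.

Definition E_ptilde (m n : nat) : grass QXY m :=
  \sum_(i < m) gscale (hY (n%:Z + (i.+1)%:Z - m%:Z))%:P (gen i).

Definition E_p : QXY := 'X.

Definition E_pLambda (m : nat) (L : spart) : grass QXY m :=
  gscale (E_p ^+ size L.2) (gprod [seq E_ptilde m n | n <- L.1]).

Definition E_super (m : nat) (f : superfun) : grass QXY m :=
  \sum_(cL <- f) gscale (cL.1%:P%:P : QXY) (E_pLambda m cL.2).

Definition specXY (N m : nat) (u : grass QXY m) : grass Qa m :=
  [ffun S => ((u S).[(N%:R : Qa)%:P]).[m%:R]].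

Definition phi_top (m : nat) : grass Qa m := gprod [seq gen i | i <- enum 'I_m].

From HB Require Import structures.
From mathcomp Require Import all_boot all_order all_algebra.
From mathcomp Require Import zify.
From Stdlib Require Import ClassicalEpsilon.
Set Implicit Arguments. Unset Strict Implicit. Unset Printing Implicit Defensive.
Import Order.TTheory GRing.Theory Num.Theory.
Local Open Scope ring_scope.

(* Both sides are linear in f, so it suffices to compare them on a product
   p_Lambda = ptilde_{a_1}...ptilde_{a_m} p_{lambda}.  Each ptilde_n (and
   each generator phi_i) is a linear form in the odd generators, and a
   product of m linear forms, read off at a set of m generators, is the
   determinant of their coefficient matrix.  Hence:
   - on the left, E(p_Lambda)|_{X=N,Y=m} = N^l(lambda) det[h_m(a_k + j + 1 - m)]
     phi_1...phi_m, and h_m(a + j + 1 - m) = C(a + j, m - 1);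
   - on the right, the coefficient of theta_1...theta_m in p_Lambda is
     p_lambda det[x_j^{a_k}], and Newton's divided differences factor
     det[x_j^{a_k}] = det[D] * prod_{i<j} (x_i - x_j), where at x = 1 the
     divided differences become D_{k,l} = C(a_k, m - 1 - l).
   The two determinants agree by Vandermonde's convolution
   C(a + j, m - 1) = sum_l C(a, m - 1 - l) C(j, l), a unitriangular change
   of columns. *)

Fixpoint mev (n : nat) (v : nat -> Qa) : mp n -> Qa :=
  match n return mp n -> Qa with
  | 0 => fun p => p
  | n'.+1 => fun p => @mev n' v (p.[mconst n' (v n')])
  end.

Lemma mevB n v (p q : mp n) : mev v (p - q) = mev v p - mev v q.
Proof. by elim: n p q => [//|n IH] p q /=; rewrite hornerD hornerN -IH. Qed.

Lemma mevM n v (p q : mp n) : mev v (p * q) = mev v p * mev v q.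
Proof. by elim: n p q => [//|n IH] p q /=; rewrite hornerM IH. Qed.

Lemma mev1 n v : mev v (1 : mp n) = 1.
Proof. by elim: n => [//|n IH] /=; rewrite hornerC IH. Qed.

HB.instance Definition _ n v :=
  GRing.isZmodMorphism.Build (mp n) Qa (@mev n v) (@mevB n v).
HB.instance Definition _ n v :=
  GRing.isMonoidMorphism.Build (mp n) Qa (@mev n v) (conj (@mev1 n v) (@mevM n v)).

Lemma mev_const n v c : mev v (mconst n c) = c.
Proof. by elim: n => [//|n IH] /=; rewrite hornerC IH. Qed.

Lemma mev_var n v i : mev v (mvar n i) = if (i < n)%N then v i else 0.
Proof.
elim: n => [//|n IH] /=; have [->|ne] := eqVneq i n.
  by rewrite hornerX mev_const ltnSn.
rewrite hornerC IH; suff -> : (i < n.+1)%N = (i < n)%N by [].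
by rewrite ltnS leq_eqVlt (negPf ne).
Qed.

Lemma meval1E n (p : mp n) : meval1 p = mev (fun _ => 1) p.
Proof.
have const1 k : mconst k 1 = 1 by elim: k => [//|k IH] /=; rewrite IH.
by elim: n p => [//|n IH] p /=; rewrite IH const1.
Qed.

Section LinearForms.
Variables (A : comNzRingType) (K : nat).

Definition linear_form (u : grass A K) (c : 'I_K -> A) : Prop :=
  forall T, u T = \sum_i c i * (T == [set i])%:R.

Lemma gmul_linear_form (u v : grass A K) c S : linear_form u c ->
  gmul u v S = \sum_(i in S) c i * gsign [set i] (S :\ i) * v (S :\ i).
Proof.
move=> Hu; rewrite ffunE.
transitivity (\sum_(T : {set 'I_K} | T \subset S) \sum_(i : 'I_K)
   c i * ((T == [set i])%:R * (gsign T (S :\: T) * v (S :\: T)))).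
  apply: eq_bigr => T _; rewrite Hu big_distrr big_distrl /=.
  by apply: eq_bigr => i _; rewrite !mulrA; congr (_ * _); rewrite -mulrA [LHS]mulrC.
rewrite exchange_big /= [RHS]big_mkcond /=; apply: eq_bigr => i _.
case: (boolP (i \in S)) => iS.
  rewrite (bigD1 [set i]) /=; last by rewrite sub1set.
  rewrite eqxx big1 ?addr0; first by rewrite mul1r mulrA.
  by move=> T /andP[_ /negPf ->]; rewrite mul0r mulr0.
rewrite big1 // => T TS; case: eqP => [eT|]; last by rewrite mul0r mulr0.
by move: TS; rewrite eT sub1set (negPf iS).
Qed.

Lemma gsign_single i (U : {set 'I_K}) :
  @gsign A K [set i] U = (-1) ^+ #|[set j in U | (j < i)%N]|.
Proof.
rewrite /gsign; congr (_ ^+ _).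
have -> : [set p : 'I_K * 'I_K | (p.1 \in [set i]) && (p.2 \in U) && (p.2 < p.1)%N]
    = [set (i, j) | j in [set j in U | (j < i)%N]].
  apply/setP => -[a b]; rewrite !inE /=; apply/idP/imsetP.
    by case/andP=> /andP[/eqP -> bU] ba; exists b => //; rewrite inE bU ba.
  by case=> j; rewrite inE => /andP[jU ji] [-> ->]; rewrite eqxx jU ji.
by rewrite card_imset // => x y [].
Qed.

End LinearForms.

Lemma card_ord_below n (j : 'I_n) : #|[set l : 'I_n | (l < j)%N]| = j.
Proof.
have -> : [set l : 'I_n | (l < j)%N] = widen_ord (ltnW (ltn_ord j)) @: setT.
  apply/setP => l; rewrite inE; apply/idP/imsetP.
    by move=> lj; exists (Ordinal lj) => //; apply: val_inj.
  by case=> k _ ->; rewrite /= ltn_ord.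
rewrite card_imset ?cardsT ?card_ord // => x y /(congr1 val) xy; exact: val_inj.
Qed.

Section IncreasingMaps.
Variables (n K : nat) (s : 'I_n.+1 -> 'I_K).
Hypothesis s_incr : {mono s : x y / (x < y)%N}.

Lemma incr_inj : injective s.
Proof.
move=> x y exy; apply: val_inj; case: (ltngtP x y) => // h.
  by move: h; rewrite -s_incr exy ltnn.
by move: h; rewrite -s_incr exy ltnn.
Qed.

Lemma incr_lift j : {mono s \o lift j : x y / (x < y)%N}.
Proof. by move=> x y; rewrite /= s_incr /= !ltnNge leq_bump2. Qed.

Lemma image_setD1 j : s @: setT :\ s j = (s \o lift j) @: setT.
Proof.
apply/setP => x; rewrite !inE; apply/andP/imsetP.
  case=> xj /imsetP[l _ xl]; subst x.
  have lj : j != l by apply: contra xj => /eqP ->.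
  by case: (unlift_some lj) => l' el _; exists l' => //; rewrite /= el.
case=> l' _ ->; split; last by apply/imsetP; exists (lift j l').
by apply/negP => /eqP /incr_inj /eqP; rewrite eq_sym (negPf (neq_lift j l')).
Qed.

Lemma card_image_below j : #|[set x in s @: setT :\ s j | (x < s j)%N]| = j.
Proof.
rewrite -[RHS](card_ord_below j) -(card_imset _ incr_inj).
apply: eq_card => x; rewrite !inE; apply/idP/imsetP.
  case/andP=> /andP[xj /imsetP[l _ xl]]; subst x; rewrite s_incr => lj.
  by exists l => //; rewrite inE.
case=> l; rewrite inE => lj ->; rewrite s_incr lj andbT.
rewrite imset_f ?inE // andbT; apply: contraTneq lj => /incr_inj ->.
by rewrite ltnn.
Qed.

End IncreasingMaps.

Section ProductOfLinearForms.
Variables (A : comNzRingType) (K : nat).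

Lemma gprod_linear_forms (us : seq (grass A K)) (c : nat -> 'I_K -> A) :
  (forall k, (k < size us)%N -> linear_form (nth 0 us k) (c k)) ->
  (forall S : {set 'I_K}, #|S| != size us -> gprod us S = 0) /\
  (forall s : 'I_(size us) -> 'I_K, {mono s : x y / (x < y)%N} ->
     gprod us (s @: setT) = \det (\matrix_(k, j) c k (s j))).
Proof.
elim: us c => [|u us IH] c lin_us.
  split=> [S|s _]; rewrite /= ffunE; first by rewrite cards_eq0 => /negPf ->.
  rewrite det_mx00; suff -> : s @: setT = set0 by rewrite eqxx.
  by apply/setP=> x; rewrite inE; apply/negP => /imsetP[[]].
have [IHzero IHdet] := IH (fun k => c k.+1) (fun k hk => lin_us k.+1 hk).
have lin_u : linear_form u (c 0%N) by exact: (lin_us 0%N).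
split=> [S cardS|s s_incr]; rewrite /= (gmul_linear_form _ _ lin_u).
  apply: big1 => i iS; rewrite IHzero ?mulr0 //; apply: contra cardS.
  by rewrite [#|S|](cardsD1 i) iS => /eqP ->.
rewrite (big_imset _ (in2W (incr_inj s_incr))) /= (expand_det_row _ ord0).
apply: eq_big => [j|j _]; first by rewrite inE.
rewrite gsign_single card_image_below // image_setD1 // IHdet; last exact: incr_lift.
rewrite mxE /cofactor add0n mulrA; congr (_ * _ * \det _).
by apply/matrixP => k l; rewrite !mxE lift0.
Qed.

Lemma gprod_linear_forms_sized (us : seq (grass A K)) (c : nat -> 'I_K -> A)
    (r : nat) : size us = r ->
  (forall k, (k < r)%N -> linear_form (nth 0 us k) (c k)) ->
  (forall S : {set 'I_K}, #|S| != r -> gprod us S = 0) /\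
  (forall s : 'I_r -> 'I_K, {mono s : x y / (x < y)%N} ->
     gprod us (s @: setT) = \det (\matrix_(k, j) c k (s j))).
Proof. by move=> <-; exact: gprod_linear_forms. Qed.

End ProductOfLinearForms.

Lemma gprod_top (A : comNzRingType) (m : nat) (us : seq (grass A m))
    (c : nat -> 'I_m -> A) (S : {set 'I_m}) : size us = m ->
  (forall k, (k < m)%N -> linear_form (nth 0 us k) (c k)) ->
  gprod us S = if S == setT then \det (\matrix_(k, j) c k j) else 0.
Proof.
move=> sz lin; have [zero minor] := gprod_linear_forms_sized sz lin.
case: eqP => [->|nS].
  by rewrite -[setT](imset_id setT) minor.
apply: zero; apply/eqP => cardS; apply: nS; apply/eqP.
by rewrite eqEcard subsetT cardsT card_ord cardS leqnn.
Qed.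

(* Newton's divided differences of x^a with nodes z_0, z_1, ...:
   ddquot a p is the quotient of X^a by (X - z_0) ... (X - z_{p-1}) taken
   one factor at a time, and dd a p = [z_0, ..., z_p] x^a its value at z_p. *)
Section DividedDifferences.
Variables (R : comNzRingType) (z : nat -> R).

Lemma divp_XsubC_eq (g : {poly R}) c :
  g = (g.[c])%:P + Pdiv.Ring.rdivp g ('X - c%:P) * ('X - c%:P).
Proof.
have monX := monicXsubC c.
set r := Pdiv.Ring.rmodp g ('X - c%:P).
have sr : (size r < size ('X - c%:P)%R)%N by rewrite Pdiv.Ring.ltn_rmodp monic_neq0.
rewrite size_XsubC ltnS in sr.
have gE := Pdiv.RingMonic.rdivp_eq monX g; rewrite -/r in gE.
have rc : r = (g.[c])%:P.
  rewrite [in RHS]gE hornerD hornerM hornerXsubC subrr mulr0 add0r.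
  by rewrite [in RHS](size1_polyC sr) hornerC -size1_polyC.
by rewrite -rc addrC -gE.
Qed.

Fixpoint ddquot (a p : nat) : {poly R} :=
  if p is p'.+1 then Pdiv.Ring.rdivp (ddquot a p') ('X - (z p')%:P) else 'X^a.

Definition dd (a p : nat) : R := (ddquot a p).[z p].

Lemma ddquot_rec a p : ddquot a p = (dd a p)%:P + ddquot a p.+1 * ('X - (z p)%:P).
Proof. exact: divp_XsubC_eq. Qed.

Definition newton_basis (l : nat) : {poly R} := \prod_(i < l) ('X - (z i)%:P).

Lemma newton_expansion a p :
  'X^a = \sum_(l < p) newton_basis l * (dd a l)%:P + newton_basis p * ddquot a p.
Proof.
elim: p => [|p IH]; first by rewrite big_ord0 add0r /newton_basis big_ord0 mul1r.
rewrite big_ord_recr /= IH -addrA; congr (_ + _).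
rewrite {1}ddquot_rec /newton_basis big_ord_recr /= mulrDr; congr (_ + _).
by rewrite !mulrA mulrAC.
Qed.

Lemma newton_eval a p : z p ^+ a = \sum_(l < p.+1) (newton_basis l).[z p] * dd a l.
Proof.
have := congr1 (horner^~ (z p)) (newton_expansion a p); rewrite /= hornerXn => ->.
rewrite hornerD horner_sum big_ord_recr /=; congr (_ + _).
  by apply: eq_bigr => l _; rewrite hornerM hornerC.
by rewrite hornerM.
Qed.

End DividedDifferences.

(* When all nodes become 1, divided differences become Taylor coefficients
   at 1: the p-th iterated quotient of X^a by X - 1 is
   \sum_u C(a, u + p) (X - 1)^u, whose value at 1 is C(a, p). *)
Section TaylorAtOne.
Variables (F : idomainType) (a : nat).

Definition taylor_tail (p : nat) : {poly F} :=
  \sum_(u < a.+1) ('C(a, u + p)%:R)%:P * ('X - 1%:P) ^+ u.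

Lemma taylor_tail_rec p :
  taylor_tail p = ('C(a, p)%:R)%:P + taylor_tail p.+1 * ('X - 1%:P).
Proof.
rewrite /taylor_tail big_ord_recl /= add0n expr0 mulr1; congr (_ + _).
rewrite big_distrl big_ord_recr /= bin_small ?mul0r ?addr0; last by lia.
by apply: eq_bigr => i _; rewrite /bump /= add1n addSn addnS exprSr mulrA.
Qed.

Lemma taylor_tail_at1 p : (taylor_tail p).[1] = 'C(a, p)%:R.
Proof.
by rewrite taylor_tail_rec hornerD hornerM hornerXsubC subrr mulr0 addr0 hornerC.
Qed.

(* the binomial theorem for X^a = (1 + (X - 1))^a *)
Lemma taylor_tail0 : taylor_tail 0 = 'X^a.
Proof.
have -> : ('X^a : {poly F}) = (1 + ('X - 1%:P)) ^+ a by rewrite addrC subrK.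
rewrite exprDn /taylor_tail; apply: eq_bigr => i _.
by rewrite expr1n mul1r addn0 polyC_natr mulr_natl.
Qed.

End TaylorAtOne.

Lemma dd_at_ones (R : comNzRingType) (F : idomainType) (z : nat -> R)
    (f : {rmorphism R -> F}) (m a p : nat) :
  (forall i, (i < m)%N -> f (z i) = 1) -> (p < m)%N -> f (dd z a p) = 'C(a, p)%:R.
Proof.
move=> z1 pm; rewrite /dd -horner_map z1 //.
suff -> : map_poly f (ddquot z a p) = taylor_tail F a p by exact: taylor_tail_at1.
elim: p pm => [|p IH] pm; first by rewrite /= map_polyXn taylor_tail0.
have X1_neq0 : ('X - 1%:P : {poly F}) != 0 by rewrite polyXsubC_eq0.
have := congr1 (map_poly f) (ddquot_rec z a p).
rewrite rmorphD rmorphM /= map_polyC map_polyXsubC z1 ?(ltnW pm) // IH ?(ltnW pm) //.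
move=> ddE; have := congr1 (horner^~ 1) ddE.
rewrite /= taylor_tail_at1 hornerD hornerM hornerXsubC subrr mulr0 addr0 hornerC => ddE1.
apply: (mulIf X1_neq0); apply: (@addrI _ ((f (dd z a p))%:P)).
by rewrite -ddE -ddE1 -taylor_tail_rec.
Qed.

(* Factorisation of the generalised Vandermonde determinant det [y_j^{a_k}]
   through Newton's interpolation with the nodes y_{m-1}, ..., y_0: the
   matrix of powers is (divided differences) * (Newton basis values), and
   the second factor is triangular with the Vandermonde product as
   determinant. *)
Section NewtonFactorisation.
Variables (R : comNzRingType) (y : nat -> R) (m : nat) (a : nat -> nat).

Definition rev_nodes (p : nat) : R := y (m.-1 - p).

Definition dd_matrix : 'M[R]_m :=
  \matrix_(k < m, l < m) dd rev_nodes (a k) (m.-1 - l).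

Definition newton_matrix : 'M[R]_m := \matrix_(l < m, j < m)
  (if (j <= l)%N then (newton_basis rev_nodes (m.-1 - l)).[y j] else 0).

Lemma powers_mx_factor : \matrix_(k < m, j < m) y j ^+ a k = dd_matrix *m newton_matrix.
Proof.
apply/matrixP => k j; rewrite !mxE.
have jm := ltn_ord j.
set p := (m.-1 - j)%N.
have yz : y j = rev_nodes p by rewrite /rev_nodes /p; congr y; lia.
rewrite yz newton_eval [RHS](reindex_inj rev_ord_inj) /=.
have pm : (p.+1 <= m)%N by rewrite /p; lia.
rewrite (big_ord_widen _ (fun l => (newton_basis rev_nodes l).[rev_nodes p] * dd rev_nodes (a k) l) pm).
rewrite big_mkcond /=; apply: eq_bigr => l _; rewrite !mxE.
have -> : (m.-1 - (m - l.+1))%N = l by have := ltn_ord l; lia.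
have -> : (j <= m - l.+1)%N = (l < p.+1)%N by rewrite /p; have := ltn_ord l; lia.
by case: ifP => _; rewrite ?mulr0 // -yz mulrC.
Qed.

Lemma det_newton_matrix :
  \det newton_matrix = \prod_(i < m) \prod_(j < m | (i < j)%N) (y i - y j).
Proof.
rewrite det_trig; last by apply/is_trig_mxP => i j ij; rewrite mxE leqNgt ij.
apply: eq_bigr => i _; rewrite mxE leqnn /newton_basis horner_prod.
rewrite [RHS](reindex_inj rev_ord_inj) /=.
have im := ltn_ord i.
rewrite (big_ord_widen _ (fun t => ('X - (rev_nodes t)%:P).[y i])
  (leq_trans (leq_subr i m.-1) (leq_pred m))).
apply: eq_big => [t|t _] /=; first by have := ltn_ord t; lia.
by rewrite hornerXsubC /rev_nodes; congr (_ - y _); lia.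
Qed.

Lemma det_powers_factor : \det (\matrix_(k < m, j < m) y j ^+ a k)
  = \det dd_matrix * \prod_(i < m) \prod_(j < m | (i < j)%N) (y i - y j).
Proof. by rewrite powers_mx_factor det_mulmx det_newton_matrix. Qed.

End NewtonFactorisation.

Lemma natQa_inj (i j : nat) : ((i%:R : Qa) == j%:R) = (i == j)%N.
Proof.
have tofrac_nat n : (n%:R : Qa) = FracField.tofrac (n%:R : {poly rat}).
  by rewrite rmorph_nat.
rewrite !tofrac_nat tofrac_eq -!polyC_natr (inj_eq polyC_inj); exact: eqr_nat.
Qed.

Lemma natQa_neq0 (n : nat) : (0 < n)%N -> (n%:R : Qa) != 0.
Proof. by rewrite lt0n => n0; rewrite -(natQa_inj n 0) in n0. Qed.

Lemma prod_rising (M k : nat) : (\prod_(t < k) (M.+1 + t))%N = (M + k) ^_ k.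
Proof.
elim: k => [|k IH]; first by rewrite big_ord0 ffactn0.
by rewrite big_ord_recr /= IH ffactnS addnS /= mulnC; congr (_ * _)%N; lia.
Qed.

Lemma hY_at_m (a j m : nat) : (j < m)%N ->
  (hY (a%:Z + (j.+1)%:Z - m%:Z)).[m%:R] = ('C(a + j, m.-1))%:R :> Qa.
Proof.
case: m => [//|M] jM /=.
case: (leqP M (a + j)) => hle; last first.
  have -> : (a%:Z + (j.+1)%:Z - M.+1%:Z) = Negz (M - (a + j)).-1 by rewrite NegzE; lia.
  by rewrite /= horner0 bin_small.
have -> : (a%:Z + (j.+1)%:Z - M.+1%:Z) = Posz (a + j - M) by lia.
have -> : (a + j)%N = (M + (a + j - M))%N by lia.
set k := (a + j - M)%N.
have -> : (M + k - M)%N = k by lia.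
rewrite /hY hornerZ horner_prod.
have -> : \prod_(i < k) ('X + i%:R%:P).[M.+1%:R] = ((M + k) ^_ k)%:R :> Qa.
  rewrite -prod_rising natr_prod; apply: eq_bigr => i _.
  by rewrite hornerD hornerX hornerC natrD.
rewrite -bin_ffact natrM mulrC mulrK; last by rewrite unitfE natQa_neq0 // fact_gt0.
by rewrite -(bin_sub (leq_addr k M)) addKn.
Qed.

(* Vandermonde's convolution C(a + j, m - 1) = \sum_l C(a, m - 1 - l) C(j, l)
   is a unitriangular column operation, so it preserves determinants. *)
Lemma det_binomial_shift (R : comNzRingType) m (a : seq nat) :
  \det (\matrix_(k < m, j < m) ('C(nth 0%N a k + j, m.-1))%:R : 'M[R]_m)
  = \det (\matrix_(k < m, l < m) ('C(nth 0%N a k, m.-1 - l))%:R : 'M[R]_m).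
Proof.
case: m => [|n]; first by rewrite !det_mx00.
set U := \matrix_(l < n.+1, j < n.+1) ('C(j, l))%:R : 'M[R]_n.+1.
set C := \matrix_(k < n.+1, l < n.+1) ('C(nth 0%N a k, n.+1.-1 - l))%:R : 'M[R]_n.+1.
have -> : \matrix_(k < n.+1, j < n.+1) ('C(nth 0%N a k + j, n.+1.-1))%:R = C *m U.
  apply/matrixP => k j; rewrite !mxE /= -binomial.Vandermonde natr_sum.
  rewrite (reindex_inj rev_ord_inj); apply: eq_bigr => i _ /=.
  rewrite !mxE /= natrM subSS; congr (_ * _); congr (_%:R); congr 'C(_, _).
  by rewrite subKn // -ltnS.
rewrite det_mulmx; suff -> : \det U = 1 by rewrite mulr1.
rewrite -det_tr det_trig; first by apply: big1 => i _; rewrite !mxE binn.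
by apply/is_trig_mxP => i j ij; rewrite !mxE bin_small.
Qed.

Lemma ptilde_linear_form N n : linear_form (ptilde_N N n) (fun i => mvar N i ^+ n).
Proof. by move=> T; rewrite /ptilde_N sum_ffunE; apply: eq_bigr => i _; rewrite !ffunE. Qed.

Lemma gprod_ptilde_first (N m : nat) (a : seq nat) : (m <= N)%N -> size a = m ->
  gprod [seq ptilde_N N n | n <- a] [set i : 'I_N | (i < m)%N]
  = \det (\matrix_(k < m, j < m) mvar N j ^+ nth 0%N a k).
Proof.
move=> mN sa.
have lin k : (k < m)%N -> linear_form (nth 0 [seq ptilde_N N n | n <- a] k)
                                      (fun i => mvar N i ^+ nth 0%N a k).
  by move=> km; rewrite (nth_map 0%N) ?sa //; exact: ptilde_linear_form.
have sz : size [seq ptilde_N N n | n <- a] = m by rewrite size_map.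
have [_ minor] := gprod_linear_forms_sized sz lin.
have -> : [set i : 'I_N | (i < m)%N] = widen_ord mN @: setT.
  apply/setP => i; rewrite inE; apply/idP/imsetP.
    by move=> im; exists (Ordinal im) => //; apply: val_inj.
  by case=> j _ ->; rewrite /= ltn_ord.
by rewrite minor //; congr (\det _); apply/matrixP => k j; rewrite !mxE.
Qed.

Definition restrict_quot (N m : nat) (f : superfun) : mp N :=
  \sum_(cL <- f) mconst N cL.1 * (\prod_(k <- cL.2.2) p_N N k *
     \det (dd_matrix (mvar N) m (nth 0%N cL.2.1))).

Lemma restrict_first (N m : nat) (f : superfun) : (m <= N)%N -> homog_ferm m f ->
  restrict N f [set i : 'I_N | (i < m)%N] = vandermonde N m * restrict_quot N m f.
Proof.
move=> mN /allP hf.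
rewrite /restrict sum_ffunE /restrict_quot big_distrr; apply: eq_big_seq => cL cLf /=.
have /andP[_ /eqP sa] := hf cL cLf.
rewrite !ffunE gprod_ptilde_first // det_powers_factor /vandermonde.
by rewrite [RHS]mulrC -!mulrA.
Qed.

(* The Vandermonde product is nonzero: evaluate it at x_i = i. *)
Lemma vandermonde_neq0 N m : (m <= N)%N -> vandermonde N m != 0.
Proof.
move=> mN; apply/negP => /eqP /(congr1 (@mev N (fun i => i%:R))).
rewrite rmorph0 rmorph_prod; apply/eqP/prodf_neq0 => i _.
rewrite rmorph_prod; apply/prodf_neq0 => j ij.
rewrite rmorphB /= !mev_var.
have -> : (i < N)%N by have := ltn_ord i; lia.
have -> : (j < N)%N by have := ltn_ord j; lia.
by rewrite subr_eq0 natQa_inj neq_ltn ij.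
Qed.

Lemma ENm_restrict N m f : (m <= N)%N -> homog_ferm m f ->
  ENm m (restrict N f) = meval1 (restrict_quot N m f).
Proof.
move=> mN hf; rewrite /ENm.
set P := fun q : mp N => _.
have Pq : P (restrict_quot N m f) by rewrite /P restrict_first.
have := epsilon_spec (inhabits 0) P (ex_intro _ _ Pq).
by rewrite /P restrict_first // => /(mulfI (vandermonde_neq0 mN)) <-.
Qed.

Lemma mev_p_N N k : mev (fun _ => 1) (p_N N k) = N%:R.
Proof.
rewrite /p_N rmorph_sum /=.
under eq_bigr => i _ do rewrite rmorphXn /= mev_var ltn_ord expr1n.
by rewrite sumr_const card_ord.
Qed.

Lemma meval_restrict_quot N m f : (m <= N)%N ->
  meval1 (restrict_quot N m f) = \sum_(cL <- f) cL.1 * (N%:R ^+ size cL.2.2 *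
     \det (\matrix_(k < m, l < m) ('C(nth 0%N cL.2.1 k, m.-1 - l))%:R : 'M[Qa]_m)).
Proof.
move=> mN; rewrite meval1E /restrict_quot rmorph_sum; apply: eq_bigr => cL _.
rewrite rmorphM /= mev_const rmorphM /= rmorph_prod /=.
under eq_bigr => k _ do rewrite mev_p_N.
rewrite big_const_seq count_predT iter_mulr mulr1 -det_map_mx.
congr (_ * (_ * \det _)); apply/matrixP => k l; rewrite !mxE /=.
apply: (@dd_at_ones _ _ _ (mev (fun _ => 1)) m).
  by move=> i im; rewrite /rev_nodes /= mev_var; have -> : (m.-1 - i < N)%N by lia.
by have := ltn_ord l; lia.
Qed.

Lemma E_ptilde_linear_form m n :
  linear_form (E_ptilde m n) (fun i : 'I_m => (hY (n%:Z + (i.+1)%:Z - m%:Z))%:P).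
Proof. by move=> T; rewrite /E_ptilde sum_ffunE; apply: eq_bigr => i _; rewrite !ffunE. Qed.

Lemma gprod_E_ptilde (m : nat) (a : seq nat) (S : {set 'I_m}) : size a = m ->
  gprod [seq E_ptilde m n | n <- a] S =
  if S == setT then \det (\matrix_(k < m, j < m)
      ((hY ((nth 0%N a k)%:Z + (j.+1)%:Z - m%:Z))%:P : QXY)) else 0.
Proof.
move=> sa; apply: (@gprod_top _ _ _
  (fun k (j : 'I_m) => (hY ((nth 0%N a k)%:Z + (j.+1)%:Z - m%:Z))%:P)).
  by rewrite size_map.
by move=> k km; rewrite (nth_map 0%N) ?sa //; exact: E_ptilde_linear_form.
Qed.

Lemma phi_top_coef m S : phi_top m S = (S == setT)%:R.
Proof.
rewrite /phi_top (@gprod_top _ _ _ (fun k i => ((k == i)%:R : Qa))).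
- case: eqP => // _; rewrite -[RHS](det1 Qa m); congr (\det _).
  by apply/matrixP => k j; rewrite !mxE.
- by rewrite size_map size_enum_ord.
move=> k km; rewrite (nth_map (Ordinal km)) ?size_enum_ord // => T.
have -> : nth (Ordinal km) (enum 'I_m) k = Ordinal km.
  by apply: val_inj; rewrite /= nth_enum_ord.
rewrite ffunE (bigD1 (Ordinal km)) //= eqxx mul1r big1 ?addr0 // => i ne.
suff -> : (k == i) = false by rewrite mul0r.
by apply: contraNF ne => /eqP ki; apply/eqP/val_inj.
Qed.

Definition ev2 (R : comNzRingType) (x : {poly R}) (y : R) (p : {poly {poly R}}) : R :=
  (p.[x]).[y].
HB.instance Definition _ (R : comNzRingType) x y :=
  GRing.RMorphism.copy (@ev2 R x y) (horner_eval y \o horner_eval x).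

Lemma specXY_E_super N m f S : homog_ferm m f ->
  specXY N (E_super m f) S = if S == setT then
   \sum_(cL <- f) cL.1 * (N%:R ^+ size cL.2.2 *
     \det (\matrix_(k < m, j < m) ('C(nth 0%N cL.2.1 k + j, m.-1))%:R : 'M[Qa]_m))
   else 0.
Proof.
move=> /allP hf; rewrite ffunE -/(ev2 _ _ _) /E_super sum_ffunE rmorph_sum.
case: eqP => [->|nS]; last first.
  apply: big1_seq => cL cLf; have /andP[_ /eqP sa] := hf cL cLf.
  by rewrite !ffunE gprod_E_ptilde // (introF eqP nS) !mulr0 rmorph0.
apply: eq_big_seq => cL cLf; have /andP[_ /eqP sa] := hf cL cLf.
rewrite !ffunE gprod_E_ptilde // eqxx !rmorphM rmorphXn -det_map_mx.
congr (_ * (_ * _)); rewrite /= /ev2 ?hornerX ?hornerC //.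
by congr (\det _); apply/matrixP => k j; rewrite !mxE !hornerC hY_at_m.
Qed.

Theorem mainTheorem20 (m : nat) (f : superfun) (N : nat) :
  homog_ferm m f -> (m <= N)%N ->
  specXY N (E_super m f) = gscale (ENm m (restrict N f)) (phi_top m).
Proof.
move=> hf mN; apply/ffunP => S.
rewrite specXY_E_super // [RHS]ffunE phi_top_coef.
case: eqP => _; last by rewrite mulr0.
rewrite mulr1 ENm_restrict // meval_restrict_quot //.
by apply: eq_bigr => cL _; rewrite det_binomial_shift.
Qed.
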